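(* Let $S$ be a pogroup. In the full subcategory of $\mathbf{Pos}\text{-}S$ consisting of $S$-posets with trivial action, the pair $(Emb, Top)$ is a weak factorization system; in particular every $S$-poset map $f:X\to B$ between $S$-posets with trivial action factors as $f=g\circ m$ with $m:X\to Y$ an order-embedding, $g:Y\to B$ a topological monotone map, and $Y$ an $S$-poset with trivial action.
   Context: A pogroup is a group with a compatible partial order. $\mathbf{Pos}\text{-}S$: right $S$-posets and action-preserving monotone maps; trivial action means $as=a$ for all $a,s$. $Emb$ is the class of order-embeddings ($f(a)\le f(a')\iff a\le a'$); $Top$ is the class of monotone maps that are topological functors (posets as categories; a functor $G$ is topological if every $G$-structured source has a unique $G$-initial lift). A weak factorization system is a pair $(\mathcal L,\mathcal R)$ of morphism classes such that every morphism factors as an $\mathcal L$-morphism followed by an $\mathcal R$-morphism, $\mathcal R=\mathcal L^{\Box}$ and $\mathcal L={}^{\Box}\mathcal R$, where $\mathcal H^{\Box}$ and ${}^{\Box}\mathcal H$ denote the morphisms having the right, respectively left, lifting property (existence of diagonal fillers in commutative squares) against all members of $\mathcal H$. *)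

Set Implicit Arguments.
Unset Strict Implicit.

Record Pogroup := {
  pg_car :> Type;
  pg_mul : pg_car -> pg_car -> pg_car;
  pg_one : pg_car;
  pg_inv : pg_car -> pg_car;
  pg_le : pg_car -> pg_car -> Prop;
  pg_mulA : forall x y z, pg_mul x (pg_mul y z) = pg_mul (pg_mul x y) z;
  pg_mul1l : forall x, pg_mul pg_one x = x;
  pg_mul1r : forall x, pg_mul x pg_one = x;
  pg_mulVl : forall x, pg_mul (pg_inv x) x = pg_one;
  pg_mulVr : forall x, pg_mul x (pg_inv x) = pg_one;
  pg_le_refl : forall x, pg_le x x;
  pg_le_anti : forall x y, pg_le x y -> pg_le y x -> x = y;
  pg_le_trans : forall x y z, pg_le x y -> pg_le y z -> pg_le x z;
  pg_le_mull : forall x y z, pg_le x y -> pg_le (pg_mul z x) (pg_mul z y);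
  pg_le_mulr : forall x y z, pg_le x y -> pg_le (pg_mul x z) (pg_mul y z)
}.

Record SPoset (S : Pogroup) := {
  sp_car :> Type;
  sp_le : sp_car -> sp_car -> Prop;
  sp_act : sp_car -> pg_car S -> sp_car;
  sp_le_refl : forall a, sp_le a a;
  sp_le_anti : forall a b, sp_le a b -> sp_le b a -> a = b;
  sp_le_trans : forall a b c, sp_le a b -> sp_le b c -> sp_le a c;
  sp_act1 : forall a, sp_act a (@pg_one S) = a;
  sp_actM : forall a s t, sp_act (sp_act a s) t = sp_act a (@pg_mul S s t);
  sp_act_mono : forall a a' s s', sp_le a a' -> @pg_le S s s' ->
                  sp_le (sp_act a s) (sp_act a' s')
}.

Record SMap (S : Pogroup) (X Y : SPoset S) := {
  smap :> sp_car X -> sp_car Y;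
  smap_mono : forall a a', @sp_le S X a a' -> @sp_le S Y (smap a) (smap a');
  smap_act : forall a s, smap (@sp_act S X a s) = @sp_act S Y (smap a) s
}.

Definition trivial_action (S : Pogroup) (X : SPoset S) : Prop :=
  forall (a : sp_car X) (s : pg_car S), @sp_act S X a s = a.

Definition is_order_embedding (S : Pogroup) (X Y : SPoset S) (f : SMap X Y) : Prop :=
  forall a a' : sp_car X, @sp_le S Y (f a) (f a') <-> @sp_le S X a a'.

(* G-initial lift, for a monotone map G : Y -> B viewed as a functor between
   posets-as-categories, of the G-structured source (b, (b -> G (y i))_{i : I}):
   an object y0 with G y0 = b, y0 <= y i for all i, such that every z with
   G z <= b and z <= y i for all i satisfies z <= y0 (all commutativity
   conditions are automatic in thin categories). *)
Definition is_initial_lift (S : Pogroup) (Y B : SPoset S) (G : SMap Y B)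
  (b : sp_car B) (I : Type) (y : I -> sp_car Y) (y0 : sp_car Y) : Prop :=
  G y0 = b /\ (forall i, @sp_le S Y y0 (y i)) /\
  (forall z : sp_car Y, @sp_le S B (G z) b -> (forall i, @sp_le S Y z (y i)) -> @sp_le S Y z y0).

Definition is_topological (S : Pogroup) (Y B : SPoset S) (G : SMap Y B) : Prop :=
  forall (b : sp_car B) (I : Type) (y : I -> sp_car Y),
    (forall i, @sp_le S B b (G (y i))) ->
    exists y0, is_initial_lift G b y y0 /\
               (forall y1, is_initial_lift G b y y1 -> y1 = y0).

Definition lifts (S : Pogroup) (A B C D : SPoset S) (m : SMap A B) (g : SMap C D) : Prop :=
  forall (u : SMap A C) (v : SMap B D),
    (forall a, g (u a) = v (m a)) ->
    exists d : SMap B C, (forall a, d (m a) = u a) /\ (forall b, g (d b) = v b).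

(* Every f : X -> B factors through B * (X -> Prop), ordered by <= in the first
   and by inclusion in the second component: x |-> (f x, {z | z <= x}) is an
   order-embedding, and the first projection is topological, the initial lift
   of a source (b, (y_i)) being (b, intersection of the y_i's second components).
   An embedding m lifts against a topological g through the diagonal sending b
   to the initial lift of (v b, (u a)_{b <= m a}).  Conversely, a map with the
   right (left) lifting property against Emb (Top) is lifted against its own
   factors, exhibiting it as a retract of its topological factor (resp. as
   reflecting the order through its embedding factor).  With trivial actions
   every monotone map is equivariant, so everything stays in the subcategory. *)

From Stdlib Require Import ClassicalEpsilon FunctionalExtensionality PropExtensionality.

Set Implicit Arguments.
Unset Strict Implicit.

Section Morphisms.
Variable S : Pogroup.

Definition smap_id (X : SPoset S) : SMap X X :=
  {| smap := fun a => a;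
     smap_mono := fun a a' h => h;
     smap_act := fun a s => eq_refl |}.

Lemma trivial_action_equivariant (X Y : SPoset S) (f : sp_car X -> sp_car Y) :
  trivial_action X -> trivial_action Y ->
  forall a s, f (@sp_act S X a s) = @sp_act S Y (f a) s.
Proof. intros hX hY a s. now rewrite hX, hY. Qed.

Definition trivial_smap (X Y : SPoset S) (hX : trivial_action X) (hY : trivial_action Y)
  (f : sp_car X -> sp_car Y)
  (f_mono : forall a a', @sp_le S X a a' -> @sp_le S Y (f a) (f a')) : SMap X Y :=
  {| smap := f; smap_mono := f_mono; smap_act := trivial_action_equivariant f hX hY |}.

End Morphisms.

Section InitialLifts.
Variables (S : Pogroup) (Y B : SPoset S) (g : SMap Y B).

Lemma initial_lift_unique (b : sp_car B) (I : Type) (y : I -> sp_car Y) y0 y1 :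
  is_initial_lift g b y y0 -> is_initial_lift g b y y1 -> y1 = y0.
Proof.
  intros [g_y0 [y0_le y0_max]] [g_y1 [y1_le y1_max]].
  apply sp_le_anti.
  - apply y0_max; [rewrite g_y1; apply sp_le_refl | exact y1_le].
  - apply y1_max; [rewrite g_y0; apply sp_le_refl | exact y0_le].
Qed.

Lemma topological_of_initial_lifts :
  (forall (b : sp_car B) (I : Type) (y : I -> sp_car Y),
     (forall i, @sp_le S B b (g (y i))) -> exists y0, is_initial_lift g b y y0) ->
  is_topological g.
Proof.
  intros lift b I y hy.
  destruct (lift b I y hy) as [y0 hy0].
  exists y0; split; [exact hy0|].
  intros y1 hy1; exact (initial_lift_unique hy0 hy1).
Qed.

End InitialLifts.

Section Factorization.
Variables (S : Pogroup) (X B : SPoset S).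

Definition fact_le (p q : sp_car B * (sp_car X -> Prop)) : Prop :=
  @sp_le S B (fst p) (fst q) /\ forall z, snd p z -> snd q z.

Definition fact_obj : SPoset S.
Proof.
  refine (@Build_SPoset S (sp_car B * (sp_car X -> Prop))%type fact_le
            (fun p _ => p) _ _ _ _ _ _); unfold fact_le.
  - intros [a P]; split; [apply sp_le_refl | auto].
  - intros [a P] [a' P'] [le_a sub_P] [le_a' sub_P']; simpl in *.
    f_equal; [now apply sp_le_anti|].
    apply functional_extensionality; intro z.
    apply propositional_extensionality; split; auto.
  - intros p q r [le_pq sub_pq] [le_qr sub_qr].
    split; [eapply sp_le_trans; eassumption | auto].
  - reflexivity.
  - reflexivity.
  - intros p p' s s' h _; exact h.
Defined.

Lemma fact_obj_trivial : trivial_action fact_obj.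
Proof. intros p s; reflexivity. Qed.

Definition fact_emb (f : SMap X B) (hX : trivial_action X) : SMap X fact_obj.
Proof.
  refine (@trivial_smap S X fact_obj hX fact_obj_trivial
            (fun x => (f x, fun z => @sp_le S X z x)) _).
  intros a a' h; split; simpl.
  - now apply smap_mono.
  - intros z hz; eapply sp_le_trans; eassumption.
Defined.

Definition fact_top (hB : trivial_action B) : SMap fact_obj B :=
  @trivial_smap S fact_obj B fact_obj_trivial hB (fun p => fst p)
    (fun p q (h : fact_le p q) => proj1 h).

Lemma fact_emb_order_embedding (f : SMap X B) (hX : trivial_action X) :
  is_order_embedding (fact_emb f hX).
Proof.
  intros a a'; split.
  - intros [_ sub]; apply sub, sp_le_refl.
  - apply smap_mono.
Qed.

Lemma fact_top_topological (hB : trivial_action B) : is_topological (fact_top hB).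
Proof.
  apply topological_of_initial_lifts; intros b I y hy.
  exists (b, fun z => forall i, snd (y i) z); split; [reflexivity | split].
  - intros i; split; [apply hy | auto].
  - intros [c P] le_cb le_y; split; [exact le_cb|].
    intros z hz i; exact (proj2 (le_y i) z hz).
Qed.

End Factorization.

Section EmbeddingLiftsTopological.
Variables (S : Pogroup) (A B C D : SPoset S) (m : SMap A B) (g : SMap C D).
Hypotheses (hB : trivial_action B) (hC : trivial_action C).
Hypotheses (hm : is_order_embedding m) (hg : is_topological g).
Variables (u : SMap A C) (v : SMap B D).
Hypothesis square : forall a, g (u a) = v (m a).

Definition diag_source (b : sp_car B) (i : {a : sp_car A | @sp_le S B b (m a)}) : sp_car C :=
  u (proj1_sig i).
Arguments diag_source : clear implicits.

Lemma diag_lift_exists (b : sp_car B) : exists c, is_initial_lift g (v b) (diag_source b) c.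
Proof.
  destruct (@hg (v b) _ (diag_source b)) as [c [hc _]]; [|now exists c].
  intros [a le_ba]; unfold diag_source; simpl.
  rewrite square; now apply smap_mono.
Qed.

Definition diag_fun (b : sp_car B) : sp_car C :=
  proj1_sig (constructive_indefinite_description _ (diag_lift_exists b)).

Lemma diag_fun_spec (b : sp_car B) : is_initial_lift g (v b) (diag_source b) (diag_fun b).
Proof. exact (proj2_sig (constructive_indefinite_description _ (diag_lift_exists b))). Qed.

Lemma diag_fun_mono b b' : @sp_le S B b b' -> @sp_le S C (diag_fun b) (diag_fun b').
Proof.
  intros le_bb'.
  destruct (diag_fun_spec b) as [g_d [d_le _]].
  destruct (diag_fun_spec b') as [_ [_ d'_max]].
  apply d'_max.
  - rewrite g_d; now apply smap_mono.
  - intros [a le_b'a]; exact (d_le (exist _ a (sp_le_trans le_bb' le_b'a))).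
Qed.

Definition diag : SMap B C := trivial_smap hB hC diag_fun_mono.

Lemma diag_comp_m a : diag (m a) = u a.
Proof.
  destruct (diag_fun_spec (m a)) as [_ [d_le d_max]].
  apply sp_le_anti.
  - exact (d_le (exist _ a (sp_le_refl (m a)))).
  - apply d_max; [rewrite square; apply sp_le_refl|].
    intros [a' le_aa']; unfold diag_source; simpl.
    now apply smap_mono, hm.
Qed.

Lemma g_comp_diag b : g (diag b) = v b.
Proof. exact (proj1 (diag_fun_spec b)). Qed.

End EmbeddingLiftsTopological.

Lemma embedding_lifts_topological (S : Pogroup) (A B C D : SPoset S)
  (m : SMap A B) (g : SMap C D) :
  trivial_action B -> trivial_action C ->
  is_order_embedding m -> is_topological g -> lifts m g.
Proof.
  intros hB hC hm hg u v square.
  exists (diag hB hC hg square).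
  split; [exact (diag_comp_m hB hC hm hg square) | apply g_comp_diag].
Qed.

Lemma topological_of_retract (S : Pogroup) (C Y D : SPoset S)
  (g : SMap C D) (g' : SMap Y D) (i : SMap C Y) (r : SMap Y C) :
  is_topological g' -> (forall c, g' (i c) = g c) ->
  (forall c, r (i c) = c) -> (forall y, g (r y) = g' y) ->
  is_topological g.
Proof.
  intros hg' g'i ri gr.
  apply topological_of_initial_lifts; intros b I y hy.
  destruct (hg' b I (fun k => i (y k))) as [y0 [[g'_y0 [y0_le y0_max]] _]].
  { intros k; rewrite g'i; apply hy. }
  exists (r y0); split; [|split].
  - now rewrite gr.
  - intros k; rewrite <- (ri (y k)); apply smap_mono, y0_le.
  - intros z g_z z_le.
    rewrite <- (ri z); apply smap_mono, y0_max.
    + now rewrite g'i.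
    + intros k; apply smap_mono, z_le.
Qed.

Lemma order_embedding_of_comp (S : Pogroup) (A B Y : SPoset S)
  (m : SMap A B) (m' : SMap A Y) (d : SMap B Y) :
  is_order_embedding m' -> (forall a, d (m a) = m' a) -> is_order_embedding m.
Proof.
  intros hm' dm a a'; split.
  - intros h; apply hm'; rewrite <- !dm; now apply smap_mono.
  - apply smap_mono.
Qed.

Theorem mainTheorem10 (S : Pogroup) :
  (* factorization: every morphism factors as an Emb followed by a Top,
     through an S-poset with trivial action *)
  (forall (X B : SPoset S) (f : SMap X B),
     trivial_action X -> trivial_action B ->
     exists (Y : SPoset S) (m : SMap X Y) (g : SMap Y B),
       trivial_action Y /\ is_order_embedding m /\ is_topological g /\
       (forall x, g (m x) = f x)) /\
  (* Top = Emb^box (in the full subcategory of trivial-action S-posets) *)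
  (forall (C D : SPoset S) (g : SMap C D),
     trivial_action C -> trivial_action D ->
     (is_topological g <->
      forall (A B : SPoset S) (m : SMap A B),
        trivial_action A -> trivial_action B ->
        is_order_embedding m -> lifts m g)) /\
  (* Emb = ^box Top (in the full subcategory of trivial-action S-posets) *)
  (forall (A B : SPoset S) (m : SMap A B),
     trivial_action A -> trivial_action B ->
     (is_order_embedding m <->
      forall (C D : SPoset S) (g : SMap C D),
        trivial_action C -> trivial_action D ->
        is_topological g -> lifts m g)).
Proof.
  split; [|split].
  - intros X B f hX hB.
    exists (fact_obj X B), (fact_emb f hX), (fact_top X hB).
    split; [apply fact_obj_trivial|].
    split; [apply fact_emb_order_embedding|].
    split; [apply fact_top_topological | reflexivity].
  - intros C D g hC hD; split.
    + intros hg A B m _ hB hm; exact (embedding_lifts_topological hB hC hm hg).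
    + intros lifts_g.
      destruct (lifts_g _ _ (fact_emb g hC) hC (@fact_obj_trivial S C D)
                  (fact_emb_order_embedding g hC) (smap_id C) (fact_top C hD)
                  (fun _ => eq_refl)) as [r [r_emb g_r]].
      exact (topological_of_retract (i := fact_emb g hC)
               (fact_top_topological (X:=C) (hB:=hD)) (fun _ => eq_refl) r_emb g_r).
  - intros A B m hA hB; split.
    + intros hm C D g hC _ hg; exact (embedding_lifts_topological hB hC hm hg).
    + intros m_lifts.
      destruct (m_lifts _ _ (fact_top A hB) (@fact_obj_trivial S A B) hB
                  (fact_top_topological (X:=A) (hB:=hB)) (fact_emb m hA) (smap_id B)
                  (fun _ => eq_refl)) as [d [d_m _]].
      exact (order_embedding_of_comp (fact_emb_order_embedding m hA) d_m).
Qed.
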